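(* For $0<\alpha\le 1$, integers $n,m\ge 0$ and $\delta\in(0,1)$, define $$c_\alpha(n,m,\delta)=\frac{\int_0^\delta \theta^{\alpha m}(1-\theta^\alpha)^n\,\mathrm{d}\theta}{\int_0^1 \theta^{\alpha m}(1-\theta^\alpha)^n\,\mathrm{d}\theta}.$$ Let $\varphi(\theta)=\theta^\alpha$ and $\psi(\theta)=\theta^\beta$ with $1\ge\alpha>\beta>0$. Then $\varphi(\theta)\le\psi(\theta)$ for all $\theta\in[0,1]$, and $c_\alpha(n,m,\delta)\le c_\beta(n,m,\delta)$ for all $n,m\in\mathbb{N}$ and all $\delta\in(0,1)$.
   Context: Interpretation: $\varphi(\theta)$ is the ''effectiveness function'' of a sampling method, i.e. the probability that one sample is negative when the true error probability is $\theta$; $c_\alpha(n,m,\delta)$ (written $c_\varphi$ in the paper) is the posterior probability, under a uniform prior on $\theta\in[0,1]$, that $\theta<\delta$ after observing $m$ negative and $n$ positive samples produced by a method with effectiveness $\theta^\alpha$. $\mathbb{N}$ includes $0$. *)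

From HB Require Import structures.
From mathcomp Require Import all_boot all_order all_algebra.
From mathcomp Require Import all_classical all_reals all_analysis.
Set Implicit Arguments. Unset Strict Implicit. Unset Printing Implicit Defensive.
Import Order.TTheory GRing.Theory Num.Theory.
Local Open Scope classical_set_scope.
Local Open Scope ring_scope.

Definition c_integrand {R : realType} (alpha : R) (n m : nat) (t : R) : R :=
  t `^ (alpha * m%:R) * (1 - t `^ alpha) ^+ n.

Definition c_alpha {R : realType} (alpha : R) (n m : nat) (delta : R) : R :=
  Rintegral lebesgue_measure `[0, delta] (c_integrand alpha n m) /
  Rintegral lebesgue_measure `[0, 1] (c_integrand alpha n m).

From HB Require Import structures.
From mathcomp Require Import all_boot all_order all_algebra.
From mathcomp Require Import all_classical all_reals all_analysis.
From mathcomp Require Import ring lra measurable_realfun.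
Import Order.TTheory GRing.Theory Num.Theory.
Local Open Scope classical_set_scope.
Local Open Scope ring_scope.

(* With [p = alpha / beta >= 1] and [u = t ^ beta], the integrand for [alpha] is
   [(u ^ p) ^ m (1 - u ^ p) ^ n] and the one for [beta] is [u ^ m (1 - u) ^ n].
   Their ratio is nondecreasing in [t], because [u ^ (p - 1)] is nondecreasing
   and, by convexity of [u ^ p], so is [(1 - u ^ p) / (1 - u)].  A nondecreasing
   ratio pushes mass to the right: splitting [[0, 1]] at [delta] and comparing
   both pieces with the integrands' values at [delta] shows that the normalised
   [alpha]-integrand gives [[0, delta]] the smaller share. *)

(* [f / g] is nondecreasing on [[a, b]], cross-multiplied so that zeros of [g]
   are harmless. *)
Definition ratio_nondecreasing_on {R : numDomainType} (a b : R) (f g : R -> R) :=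
  forall t s, a <= t -> t <= s -> s <= b -> f t * g s <= f s * g t.

Lemma ratio_le_of_cross_le {R : realFieldType} (F F' G G' k l : R) :
  0 <= F -> 0 <= F' -> 0 <= G -> 0 <= G' -> 0 < k -> 0 < l ->
  F * l <= k * G -> G' * k <= l * F' ->
  F / (F + F') <= G / (G + G').
Proof.
move=> F0 F'0 G0 G'0 k0 l0 below above.
have cross : F * G' <= G * F'.
  rewrite -(ler_pM2r (mulr_gt0 k0 l0)).
  have := ler_pM (mulr_ge0 F0 (ltW l0)) (mulr_ge0 G'0 (ltW k0)) below above.
  by congr (_ <= _); ring.
have [GG0|GG0] := eqVneq (G + G') 0.
  have G_eq0 : G = 0 by lra.
  have F_eq0 : F = 0.
    apply/eqP; rewrite eq_le F0 -(ler_pM2r l0) mul0r.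
    by rewrite (le_trans below) // G_eq0 mulr0.
  by rewrite F_eq0 G_eq0 !mul0r.
have [FF0|FF0] := eqVneq (F + F') 0.
  by rewrite FF0 invr0 mulr0 divr_ge0 // addr_ge0.
have FFgt0 : 0 < F + F' by rewrite lt_def FF0 addr_ge0.
have GGgt0 : 0 < G + G' by rewrite lt_def GG0 addr_ge0.
by rewrite ler_pdivrMr // mulrAC ler_pdivlMr //; nra.
Qed.

Section integral_cross_le.
Context d (T : measurableType d) (R : realType).
Variable mu : {measure set T -> \bar R}.

Lemma integrable_mulr (D : set T) (f : T -> R) (k : R) : measurable D ->
  mu.-integrable D (EFin \o f) -> mu.-integrable D (EFin \o (fun t => f t * k)).
Proof. by move=> mD /(integrableZr mD k); apply: eq_integrable. Qed.

Lemma Rintegral_cross_le (D : set T) (f g : T -> R) (k l : R) : measurable D ->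
  mu.-integrable D (EFin \o f) -> mu.-integrable D (EFin \o g) ->
  (forall t, D t -> f t * k <= l * g t) ->
  \int[mu]_(t in D) f t * k <= l * \int[mu]_(t in D) g t.
Proof.
move=> mD intf intg fg; rewrite -RintegralZr // -RintegralZl //.
apply: le_Rintegral => //; first exact: integrable_mulr.
exact: eq_integrable (integrableZl mD l intg).
Qed.

End integral_cross_le.

Section ratio_of_integrals.
Context {R : realType}.
Notation mu := (@lebesgue_measure R).

Lemma Rintegral_itv_ratio_le (f g : R -> R) (a b d : R) :
  a <= d -> d <= b ->
  mu.-integrable `[a, b] (EFin \o f) -> mu.-integrable `[a, b] (EFin \o g) ->
  (forall t, a <= t <= b -> 0 <= f t) -> (forall t, a <= t <= b -> 0 <= g t) ->
  0 < f d -> 0 < g d -> ratio_nondecreasing_on a b f g ->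
  \int[mu]_(t in `[a, d]) f t / \int[mu]_(t in `[a, b]) f t <=
  \int[mu]_(t in `[a, d]) g t / \int[mu]_(t in `[a, b]) g t.
Proof.
move=> ad db intf intg f0 g0 fd0 gd0 fg.
have split_at_d h : mu.-integrable `[a, b] (EFin \o h) ->
    \int[mu]_(t in `[a, b]) h t =
    \int[mu]_(t in `[a, d]) h t + \int[mu]_(t in `]d, b]) h t.
  by move=> inth; rewrite -(Rintegral_itvB inth) ?bnd_simp // addrC subrK.
have [sub_ad sub_db] : `[a, d] `<=` `[a, b] /\ `]d, b] `<=` `[a, b].
  split=> t /=; rewrite !in_itv /= => /andP[ta tb]; apply/andP; split => //.
  - exact: le_trans db.
  - exact: le_trans (ltW ta).
have int_sub D h : D `<=` `[a, b] -> measurable D ->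
    mu.-integrable `[a, b] (EFin \o h) -> mu.-integrable D (EFin \o h).
  by move=> DS mD; apply: integrableS.
rewrite (split_at_d f) // (split_at_d g) //.
apply: (ratio_le_of_cross_le _ _ _ _ (f d) (g d) _ _ _ _ fd0 gd0).
- by apply: Rintegral_ge0 => t /sub_ad; rewrite /= in_itv; exact: f0.
- by apply: Rintegral_ge0 => t /sub_db; rewrite /= in_itv; exact: f0.
- by apply: Rintegral_ge0 => t /sub_ad; rewrite /= in_itv; exact: g0.
- by apply: Rintegral_ge0 => t /sub_db; rewrite /= in_itv; exact: g0.
- apply: Rintegral_cross_le; [by [] | exact: int_sub intf | exact: int_sub intg|].
  by move=> t /=; rewrite in_itv /= => /andP[ta td]; exact: fg.
- apply: Rintegral_cross_le; [by [] | exact: int_sub intg | exact: int_sub intf|].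
  move=> t /=; rewrite in_itv /= => /andP[dt tb].
  by rewrite mulrC [_ * f t]mulrC; apply: fg => //; exact: ltW.
Qed.

End ratio_of_integrals.

Section c_integrand_theory.
Context {R : realType}.
Notation mu := (@lebesgue_measure R).
Implicit Types (x p t s a b al be : R) (n m : nat).

Lemma powR_le1 t x : 0 <= t -> t <= 1 -> 0 <= x -> t `^ x <= 1.
Proof.
move=> t0 t1 x0; have := @ge0_ler_powR R x x0 t 1.
by rewrite powR1; apply; rewrite ?nnegrE.
Qed.

Lemma c_integrandE x n m t : 0 <= t ->
  c_integrand x n m t = (t `^ x) ^+ m * (1 - t `^ x) ^+ n.
Proof. by move=> t0; rewrite /c_integrand powRrM powR_mulrn // powR_ge0. Qed.

Lemma c_integrand_ge0 x n m t : 0 <= x -> 0 <= t <= 1 ->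
  0 <= c_integrand x n m t.
Proof.
move=> x0 /andP[t0 t1]; rewrite c_integrandE //.
by rewrite mulr_ge0 ?exprn_ge0 ?powR_ge0 // subr_ge0 powR_le1.
Qed.

Lemma c_integrand_le1 x n m t : 0 <= x -> 0 <= t <= 1 ->
  c_integrand x n m t <= 1.
Proof.
move=> x0 /andP[t0 t1]; rewrite c_integrandE //.
have tx0 : 0 <= t `^ x := powR_ge0 _ _.
have tx1 : t `^ x <= 1 by exact: powR_le1.
by rewrite mulr_ile1 ?exprn_ge0 ?exprn_ile1 ?subr_ge0 // lerBlDr lerDl.
Qed.

Lemma c_integrand_gt0 x n m t : 0 < x -> 0 < t < 1 -> 0 < c_integrand x n m t.
Proof.
move=> x0 /andP[t0 t1]; rewrite c_integrandE ?ltW //.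
have tx1 : t `^ x < 1.
  by have := @gt0_ltr_powR R x x0 t 1; rewrite powR1; apply; rewrite ?nnegrE ?ltW.
by rewrite mulr_gt0 // exprn_gt0 ?powR_gt0 ?subr_gt0.
Qed.

Lemma measurable_c_integrand x n m :
  measurable_fun setT (c_integrand (R:=R) x n m).
Proof.
apply: measurable_funM; first exact: measurable_powR.
apply: measurable_funX; apply: measurable_funB; first exact: measurable_cst.
exact: measurable_powR.
Qed.

Lemma c_integrand_integrable x n m : 0 <= x ->
  mu.-integrable `[0, 1] (EFin \o c_integrand x n m).
Proof.
move=> x0; apply: measurable_bounded_integrable.
- exact: measurable_itv.
- by have /= -> := @lebesgue_measure_itv R `[0, 1]; rewrite lte_fin ltr01 ltry.
- exact: measurable_funS (measurable_c_integrand x n m).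
exists 1; split; first by rewrite num_real.
move=> M M1 t /=; rewrite in_itv /= => t01.
rewrite ger0_norm ?c_integrand_ge0 //.
by rewrite (le_trans (c_integrand_le1 _ n m _ x0 t01)) // ltW.
Qed.

Lemma powR_cross_le p a b : 1 <= p -> 0 <= a -> a <= b ->
  a `^ p * b <= b `^ p * a.
Proof.
move=> p1 a0 ab; have p0 : 0 < p := lt_le_trans ltr01 p1.
have b0 : 0 <= b := le_trans a0 ab.
rewrite -(mulr_powRB1 a0 p0) -(mulr_powRB1 b0 p0).
rewrite mulrAC [leRHS]mulrAC [b * a]mulrC.
apply: ler_wpM2l; first by rewrite mulr_ge0.
by apply: ge0_ler_powR; rewrite ?nnegrE ?subr_ge0.
Qed.

Lemma onem_powR_cross_le p a b : 1 <= p -> 0 <= a -> a <= b -> b <= 1 ->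
  (1 - a `^ p) * (1 - b) <= (1 - b `^ p) * (1 - a).
Proof.
move=> p1 a0 ab b1.
have [a_eq1|a_neq1] := eqVneq a 1.
  have b_eq1 : b = 1 by apply: le_anti; rewrite b1 -a_eq1 ab.
  by rewrite a_eq1 b_eq1 !subrr !mulr0.
have onem_a_gt0 : 0 < 1 - a.
  by rewrite subr_gt0 lt_neqAle a_neq1 (le_trans ab b1).
pose l := (1 - b) / (1 - a).
have l0 : 0 <= l by apply: divr_ge0; [rewrite subr_ge0 | exact: ltW].
have l1 : l <= 1 by rewrite ler_pdivrMr // mul1r lerB.
have b_conv : b = l * a + (1 - l) * 1 by rewrite /l; field; rewrite gt_eqF.
have b_powR : b `^ p <= l * a `^ p + (1 - l) * 1 `^ p.
  rewrite {1}b_conv; apply: (convex_powR p1 (Itv01 l0 l1));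
    by rewrite inE /= in_itv /= andbT.
rewrite powR1 in b_powR.
have -> : (1 - a `^ p) * (1 - b) = l * (1 - a `^ p) * (1 - a).
  by rewrite /l; field; rewrite gt_eqF.
by apply: ler_wpM2r; [exact: ltW | lra].
Qed.

Lemma c_integrand_ratio_nondecreasing al be n m : 0 < be -> be < al ->
  ratio_nondecreasing_on 0 1 (c_integrand al n m) (c_integrand be n m).
Proof.
move=> be0 beal t s t0 ts s1.
have s0 := le_trans t0 ts.
have p1 : 1 <= al / be by rewrite ler_pdivlMr // mul1r ltW.
have powR_al u : u `^ al = (u `^ be) `^ (al / be).
  by rewrite -powRrM mulrC divfK // gt_eqF.
rewrite !c_integrandE // !powR_al.
have a0 : 0 <= t `^ be := powR_ge0 _ _.
have ab : t `^ be <= s `^ be by apply: ge0_ler_powR; rewrite ?nnegrE // ltW.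
have b1 : s `^ be <= 1 by apply: powR_le1 => //; exact: ltW.
move: (al / be) p1 (t `^ be) (s `^ be) a0 ab b1 => p p1 a b a0 ab b1.
have b0 := le_trans a0 ab.
have p0 : 0 <= p := le_trans ler01 p1.
have a1 : a <= 1 := le_trans ab b1.
have ap1 : a `^ p <= 1 by exact: powR_le1.
have bp1 : b `^ p <= 1 by exact: powR_le1.
have expr_cross (A u : R) :
    A ^+ m * (1 - A) ^+ n * (u ^+ m * (1 - u) ^+ n) =
    (A * u) ^+ m * ((1 - A) * (1 - u)) ^+ n by rewrite !exprMn; ring.
rewrite !expr_cross; apply: ler_pM.
- by rewrite exprn_ge0 // mulr_ge0 // powR_ge0.
- by rewrite exprn_ge0 // mulr_ge0 // subr_ge0.
- by rewrite lerXn2r ?nnegrE ?powR_cross_le // mulr_ge0 // powR_ge0.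
- by rewrite lerXn2r ?nnegrE ?onem_powR_cross_le // mulr_ge0 // subr_ge0.
Qed.

End c_integrand_theory.

Theorem theorem1 (R : realType) (alpha beta : R) :
  0 < beta -> beta < alpha -> alpha <= 1 ->
  (forall theta : R, 0 <= theta <= 1 -> theta `^ alpha <= theta `^ beta) /\
  (forall (n m : nat) (delta : R), 0 < delta < 1 ->
     c_alpha alpha n m delta <= c_alpha beta n m delta).
Proof.
move=> beta0 beta_alpha _; have alpha0 := lt_trans beta0 beta_alpha.
split.
  move=> theta /andP[theta0 theta1]; have [->|theta_neq0] := eqVneq theta 0.
    by rewrite !powR0 // gt_eqF.
  by apply: ger_powR (ltW beta_alpha); rewrite lt_def theta_neq0 theta0.
move=> n m delta /andP[delta0 delta1].
apply: Rintegral_itv_ratio_le.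
- exact: ltW.
- exact: ltW.
- exact/c_integrand_integrable/ltW.
- exact/c_integrand_integrable/ltW.
- by move=> t; apply: c_integrand_ge0; exact: ltW.
- by move=> t; apply: c_integrand_ge0; exact: ltW.
- by apply: c_integrand_gt0; rewrite ?delta0.
- by apply: c_integrand_gt0; rewrite ?delta0.
- exact: c_integrand_ratio_nondecreasing.
Qed.
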